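(* Let $(D,\Gamma)$ be a consistent action theory, $n\ge0$, and let $X$ be an answer set of the program $\pi$. Then: (i) $s_t(X)$ is a state of $D$ for every $t\in\{0,\dots,n\}$; (ii) for every $t\in\{0,\dots,n-1\}$ and action $a$, if $occ(a,t)\in X$ then $a$ is executable in $s_t(X)$ and $s_{t+1}(X)\in\Phi(a,s_t(X))$; (iii) for every $t\in\{0,\dots,n-1\}$, if $occ(a,t)\notin X$ for every action $a$, then $s_{t+1}(X)=s_t(X)$.
   Context: Action language $\mathcal{B}$: fix finite sets $\mathbf{F}$ of fluents and $\mathbf{A}$ of actions. A fluent literal is $f$ or $\neg f$ ($f\in\mathbf{F}$); the complement $\bar l$ of $f$ is $\neg f$ and of $\neg f$ is $f$. A set of fluent literals is consistent if it contains no pair $f,\neg f$; an interpretation is a maximal consistent set. For a set $u$ of literals, $u\models p_1\wedge\dots\wedge p_k$ means $\{p_1,\dots,p_k\}\subseteq u$. A domain description $D$ is a finite set of static causal laws $\mathbf{caused}(\{p_1,\dots,p_k\},f)$ (their set is $D_C$), dynamic causal laws $\mathbf{causes}(a,f,\{p_1,\dots,p_k\})$ and executability conditions $\mathbf{executable}(a,\{p_1,\dots,p_k\})$, with $a\in\mathbf{A}$ and $f,p_i$ fluent literals; $\Gamma$ is a set of propositions $\mathbf{initially}(f)$. A consistent set $u$ is closed under $D_C$ if for every $\mathbf{caused}(P,f)\in D_C$ with $P\subseteq u$, $f\in u$; $Cl_{D_C}(u)$ is the least consistent superset of $u$ closed under $D_C$ (undefined if none). A state is an interpretation closed under $D_C$.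 Action $a$ is executable in state $s$ if some $\mathbf{executable}(a,P)\in D$ has $P\subseteq s$. $E(a,s)=\{f\mid \mathbf{causes}(a,f,P)\in D,\ P\subseteq s\}$. $\Phi(a,s)=\{s'\mid s'\text{ a state},\ s'=Cl_{D_C}(E(a,s)\cup(s\cap s'))\}$ if $a$ is executable in $s$, and $\Phi(a,s)=\emptyset$ otherwise. A trajectory is a sequence $s_0a_0s_1\dots a_{m-1}s_m$ of states $s_i$ and actions $a_i$ with $s_{i+1}\in\Phi(a_i,s_i)$. $D$ is consistent if $\Phi(a,s)\ne\emptyset$ whenever $a$ is executable in state $s$; $(D,\Gamma)$ is consistent if $D$ is consistent and $s_0^\Gamma:=\{f\mid\mathbf{initially}(f)\in\Gamma\}$ is a state of $D$. Answer sets: a ground normal program consists of rules $h\leftarrow b_1,\dots,b_m,\mathit{not}\,c_1,\dots,\mathit{not}\,c_r$ and constraints $\bot\leftarrow b_1,\dots,b_m,\mathit{not}\,c_1,\dots,\mathit{not}\,c_r$. For a set $S$ of atoms, the reduct $\Pi^S$ deletes every rule/constraint containing $\mathit{not}\,c$ with $c\in S$ and deletes all $\mathit{not}$-literals from the rest; $S$ is an answer set of $\Pi$ if $S$ is the least set of atoms closed under the non-constraint rules of $\Pi^S$ and no constraint of $\Pi^S$ has its whole body contained in $S$. The program $\pi$ (ground; $t$ ranges over $\{0,\dots,n\}$ unless stated): (1) $holds(l,0)\leftarrow$ for each $\mathbf{initially}(l)\in\Gamma$; (2) $possible(a,t)\leftarrow holds(p_1,t),\dots,holds(p_k,t)$ for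 each $\mathbf{executable}(a,\{p_1,\dots,p_k\})\in D$; (3) for $t\in\{0,\dots,n-1\}$, $holds(f,t+1)\leftarrow occ(a,t),possible(a,t),holds(p_1,t),\dots,holds(p_k,t)$ for each $\mathbf{causes}(a,f,\{p_1,\dots,p_k\})\in D$; (4) $holds(f,t)\leftarrow holds(p_1,t),\dots,holds(p_k,t)$ for each $\mathbf{caused}(\{p_1,\dots,p_k\},f)\in D$; (5) $occ(a,t)\leftarrow possible(a,t),\mathit{not}\,nocc(a,t)$ for each action $a$; (6) $nocc(a,t)\leftarrow occ(b,t)$ for each pair of distinct actions $a\ne b$; (7) for $t\in\{0,\dots,n-1\}$, $holds(l,t+1)\leftarrow holds(l,t),\mathit{not}\,holds(\bar l,t+1)$ for each fluent literal $l$; (8) $\bot\leftarrow holds(f,t),holds(\neg f,t)$ for each fluent $f$. For a set $M$ of atoms, $s_i(M)=\{l\mid l\text{ a fluent literal},\ holds(l,i)\in M\}$. *)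

From Stdlib Require List.
From mathcomp Require Import all_boot.
Set Implicit Arguments. Unset Strict Implicit. Unset Printing Implicit Defensive.

Section ActionLanguageB.
Variables (F A : finType).

(* A fluent literal: (f, true) is f, (f, false) is ~ f. *)
Definition lit := (F * bool)%type.
Definition compl (l : lit) : lit := (l.1, ~~ l.2).

Definition consistent (u : {set lit}) : Prop :=
  forall f : F, ~ ((f, true) \in u /\ (f, false) \in u).

Definition interpretation (u : {set lit}) : Prop :=
  consistent u /\ forall v : {set lit}, consistent v -> u \subset v -> v = u.

(* Domain description: static laws caused(P,f), dynamic laws causes(a,f,P),
   executability conditions executable(a,P). *)
Record domain := Domain {
  static_laws : seq (seq lit * lit);
  dynamic_laws : seq (A * lit * seq lit);
  exec_conds : seq (A * seq lit) }.

Variable D : domain.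

Definition closed_DC (u : {set lit}) : Prop :=
  forall c, List.In c (static_laws D) -> {subset c.1 <= u} -> c.2 \in u.

Definition is_Cl (u v : {set lit}) : Prop :=
  consistent v /\ u \subset v /\ closed_DC v /\
  forall w, consistent w -> u \subset w -> closed_DC w -> v \subset w.

Definition is_state (s : {set lit}) : Prop := interpretation s /\ closed_DC s.

Definition executable (a : A) (s : {set lit}) : Prop :=
  exists P, List.In (a, P) (exec_conds D) /\ {subset P <= s}.

Definition Eff (a : A) (s : {set lit}) : {set lit} :=
  [set l | has (fun c : A * lit * seq lit =>
                  (c.1.1 == a) && (c.1.2 == l) && all (fun p => p \in s) c.2)
               (dynamic_laws D)].

Definition in_Phi (a : A) (s s' : {set lit}) : Prop :=
  executable a s /\ is_state s' /\ is_Cl (Eff a s :|: (s :&: s')) s'.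

Definition consistent_domain : Prop :=
  forall a s, is_state s -> executable a s -> exists s', in_Phi a s s'.

Definition s0 (Gamma : seq lit) : {set lit} := [set l | l \in Gamma].

Definition consistent_theory (Gamma : seq lit) : Prop :=
  consistent_domain /\ is_state (s0 Gamma).

End ActionLanguageB.

Record rule (atom : Type) := Rule {
  head : option atom;       (* None = constraint (bottom) *)
  pos : seq atom;
  neg : seq atom }.

Section AnswerSets.
Variable atom : Type.
Implicit Types (P : seq (rule atom)) (S : atom -> bool) (T : atom -> Prop).

(* T is closed under the non-constraint rules of the reduct P^S *)
Definition reduct_closed P S T : Prop :=
  forall r h, List.In r P -> head r = Some h ->
    (forall c, List.In c (neg r) -> ~~ S c) ->
    (forall b, List.In b (pos r) -> T b) -> T h.

Definition answer_set P S : Prop :=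
  reduct_closed P S (fun x => S x) /\
  (forall T, reduct_closed P S T -> forall x, S x -> T x) /\
  (forall r, List.In r P -> head r = None ->
     (forall c, List.In c (neg r) -> ~~ S c) ->
     ~ (forall b, List.In b (pos r) -> S b)).
End AnswerSets.

Section Program.
Variables (F A : finType).

Inductive atom :=
| Holds of lit F & nat
| Possible of A & nat
| Occ of A & nat
| Nocc of A & nat.

Variables (D : domain F A) (Gamma : seq (lit F)) (n : nat).

Definition mkR h p q : rule atom := Rule h p q.

Definition lits : seq (lit F) := [seq (f, b) | f <- enum F, b <- [:: true; false]].

Definition pi_rules : seq (rule atom) :=
  [seq mkR (Some (Holds l 0)) [::] [::] | l <- Gamma] ++
  [seq mkR (Some (Possible e.1 t)) [seq Holds p t | p <- e.2] [::]
     | t <- iota 0 n.+1, e <- exec_conds D] ++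
  [seq mkR (Some (Holds c.1.2 t.+1))
           (Occ c.1.1 t :: Possible c.1.1 t :: [seq Holds p t | p <- c.2]) [::]
     | t <- iota 0 n, c <- dynamic_laws D] ++
  [seq mkR (Some (Holds c.2 t)) [seq Holds p t | p <- c.1] [::]
     | t <- iota 0 n.+1, c <- static_laws D] ++
  [seq mkR (Some (Occ a t)) [:: Possible a t] [:: Nocc a t]
     | t <- iota 0 n.+1, a <- enum A] ++
  [seq mkR (Some (Nocc ab.1 t)) [:: Occ ab.2 t] [::]
     | t <- iota 0 n.+1,
       ab <- [seq p <- [seq (a, b) | a <- enum A, b <- enum A] | p.1 != p.2]] ++
  [seq mkR (Some (Holds l t.+1)) [:: Holds l t] [:: Holds (compl l) t.+1]
     | t <- iota 0 n, l <- lits] ++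
  [seq mkR None [:: Holds (f, true) t; Holds (f, false) t] [::]
     | t <- iota 0 n.+1, f <- enum F].

Definition s_of (M : atom -> bool) (i : nat) : {set lit F} :=
  [set l | M (Holds l i)].

End Program.

(** An answer set is the least model of its reduct, so the literals true at time
t+1 come only from three sources: effects of the action occurring at t (unique,
by rules (5)-(6)), inertia (rule (7)), and static laws (rule (4)).  This yields
[s_{t+1} = Cl(E(a, s_t) ∪ (s_t ∩ s_{t+1}))] when [a] occurs at [t], and
[s_{t+1} = s_t] when no action occurs.  Each [s_t] is consistent by the
constraints (8), closed by rule (4), and complete by inertia starting from the
complete set [s_0 ⊇ s_0^Γ]; hence it is a state. *)
From Pilot Require Import Defs.
From mathcomp Require Import all_boot.
Set Implicit Arguments. Unset Strict Implicit. Unset Printing Implicit Defensive.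

Lemma In_cat (T : Type) (x : T) (s1 s2 : seq T) :
  List.In x (s1 ++ s2) <-> List.In x s1 \/ List.In x s2.
Proof. exact: List.in_app_iff. Qed.

Lemma In_map (T U : Type) (f : T -> U) (y : U) (s : seq T) :
  List.In y (map f s) <-> exists2 x, List.In x s & y = f x.
Proof.
rewrite (List.in_map_iff f s y).
by split=> -[x]; [case=> <-; exists x | exists x].
Qed.

Lemma In_mem (T : eqType) (x : T) (s : seq T) : List.In x s <-> x \in s.
Proof.
elim: s => [|y s IH] //; rewrite in_cons /=.
by split=> [[->|/IH->] | /orP[/eqP|/IH]]; rewrite ?eqxx ?orbT; auto.
Qed.

Lemma In_allpairs (S T R : Type) (f : S -> T -> R) (s : seq S) (t : seq T) (z : R) :
  List.In z [seq f x y | x <- s, y <- t] <->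
  exists x y, [/\ List.In x s, List.In y t & z = f x y].
Proof.
elim: s => [|x s IH] /=; first by split=> // -[? [? []]].
rewrite In_cat In_map IH; split.
- case=> [[y Hy ->] | [x' [y [Hx' Hy ->]]]]; first by exists x, y; split; auto.
  by exists x', y; split; auto.
- case=> x' [y [[Ex|Hx'] Hy ->]]; last by right; exists x', y.
  by subst x'; left; exists y.
Qed.

Lemma In_iota0 t m : List.In t (iota 0 m) <-> t < m.
Proof. by rewrite In_mem mem_iota. Qed.

Lemma In_enum (T : finType) (x : T) : List.In x (enum T).
Proof. by apply/In_mem; rewrite mem_enum. Qed.

Section AnswerSet.
Variables (atm : Type) (P : seq (rule atm)) (S : atm -> bool).
Hypothesis HS : answer_set P S.

Lemma answer_set_fires r h : List.In r P -> Defs.head r = Some h ->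
  (forall c, List.In c (neg r) -> ~~ S c) ->
  (forall b, List.In b (pos r) -> S b) -> S h.
Proof. exact: HS.1. Qed.

Lemma answer_set_constraint r : List.In r P -> Defs.head r = None ->
  (forall c, List.In c (neg r) -> ~~ S c) ->
  ~ (forall b, List.In b (pos r) -> S b).
Proof. exact: HS.2.2. Qed.

(* Minimality of [S] among the models of the reduct, applied to [S ∩ Q]. *)
Lemma answer_set_ind (Q : atm -> Prop) :
  (forall r h, List.In r P -> Defs.head r = Some h ->
     (forall c, List.In c (neg r) -> ~~ S c) ->
     (forall b, List.In b (pos r) -> S b /\ Q b) -> Q h) ->
  forall x, S x -> Q x.
Proof.
move=> IH x Sx; have [_ [Smin _]] := HS.
suff /(_ x Sx)[] : forall y, S y -> S y /\ Q y by [].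
apply: Smin => r h Hr Hh Hneg Hpos; split; last exact: IH Hr Hh Hneg Hpos.
by apply: answer_set_fires Hr Hh Hneg _ => b /Hpos[].
Qed.

Lemma answer_set_supported x : S x ->
  exists r, [/\ List.In r P, Defs.head r = Some x,
    forall c, List.In c (neg r) -> ~~ S c & forall b, List.In b (pos r) -> S b].
Proof.
move: x; apply: answer_set_ind => r h Hr Hh Hneg Hpos.
by exists r; split=> // b /Hpos[].
Qed.

End AnswerSet.

Section Literals.
Variable F : finType.
Implicit Type u : {set lit F}.

Definition complete u : Prop := forall f, (f, true) \in u \/ (f, false) \in u.

Lemma interpretationP u : interpretation u <-> consistent u /\ complete u.
Proof.
split=> [[Hcons Hmax] | [Hcons Hcompl]]; last first.
  split=> // v Hv /subsetP Huv; apply/setP => -[f b].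
  apply/idP/idP => [Hfb|]; last exact: Huv.
  by case: (Hcompl f) => Hf; have := Huv _ Hf; case: b Hfb => Hfb Hfv //;
     case: (Hv f); split.
split=> // f; case Ht: ((f, true) \in u); first by left.
right; apply/negPn/negP => Hf.
have Hcons' : consistent ((f, true) |: u).
  move=> g []; rewrite !inE => /orP[/eqP[->]|Hg1] /orP[/eqP//|Hg2].
  - by move/negP: Hf.
  - exact: (Hcons g).
by move: (Hmax _ Hcons' (subsetUr _ _)) => /setP/(_ (f, true)); rewrite setU11 Ht.
Qed.

Lemma consistent_compl u l : consistent u -> l \in u -> compl l \notin u.
Proof.
by case: l => f [] Hu Hl; apply/negP => Hc; apply: (Hu f).
Qed.

End Literals.

Section ProgramRules.
Variables (F A : finType) (D : domain F A) (Gamma : seq (lit F)) (n : nat).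

Inductive pi_rule : rule (atom F A) -> Prop :=
| PiInitially l : l \in Gamma -> pi_rule (mkR (Some (Holds A l 0)) [::] [::])
| PiExecutable t a P : t <= n -> List.In (a, P) (exec_conds D) ->
    pi_rule (mkR (Some (Possible F a t)) [seq Holds A p t | p <- P] [::])
| PiDynamic t c : t < n -> List.In c (dynamic_laws D) ->
    pi_rule (mkR (Some (Holds A c.1.2 t.+1))
      (Occ F c.1.1 t :: Possible F c.1.1 t :: [seq Holds A p t | p <- c.2]) [::])
| PiStatic t c : t <= n -> List.In c (static_laws D) ->
    pi_rule (mkR (Some (Holds A c.2 t)) [seq Holds A p t | p <- c.1] [::])
| PiOcc t a : t <= n ->
    pi_rule (mkR (Some (Occ F a t)) [:: Possible F a t] [:: Nocc F a t])
| PiNocc t a b : t <= n -> a != b ->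
    pi_rule (mkR (Some (Nocc F a t)) [:: Occ F b t] [::])
| PiInertia t l : t < n ->
    pi_rule (mkR (Some (Holds A l t.+1)) [:: Holds A l t] [:: Holds A (compl l) t.+1])
| PiConsistency t f : t <= n ->
    pi_rule (mkR None [:: Holds A (f, true) t; Holds A (f, false) t] [::]).

Lemma In_lits l : List.In l (lits F).
Proof.
case: l => f b; rewrite /lits; apply/In_allpairs; exists f, b.
by split; [exact: In_enum | case: b; [left | right; left] |].
Qed.

Lemma pi_rulesP r : List.In r (pi_rules D Gamma n) <-> pi_rule r.
Proof.
split.
  case/In_cat=> [/In_map[l /In_mem Hl ->] | ]; first exact: PiInitially.
  case/In_cat=> [/In_allpairs[t [[a P] [/In_iota0 Ht HP ->]]] | ].
    exact: PiExecutable.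
  case/In_cat=> [/In_allpairs[t [c [/In_iota0 Ht Hc ->]]] | ]; first exact: PiDynamic.
  case/In_cat=> [/In_allpairs[t [c [/In_iota0 Ht Hc ->]]] | ]; first exact: PiStatic.
  case/In_cat=> [/In_allpairs[t [a [/In_iota0 Ht _ ->]]] | ]; first exact: PiOcc.
  case/In_cat=> [/In_allpairs[t [[a b] [/In_iota0 Ht /In_mem Hab ->]]] | ].
    by apply: PiNocc; move: Hab; rewrite mem_filter => /andP[].
  case/In_cat=> [/In_allpairs[t [l [/In_iota0 Ht _ ->]]] | ]; first exact: PiInertia.
  by case/In_allpairs=> t [f [/In_iota0 Ht _ ->]]; exact: PiConsistency.
case=> [l Hl | t a P Ht HP | t c Ht Hc | t c Ht Hc | t a Ht | t a b Ht Hab | t l Ht | t f Ht].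
- by apply/In_cat; left; apply/In_map; exists l => //; apply/In_mem.
- do 1 (apply/In_cat; right); apply/In_cat; left.
  by apply/In_allpairs; exists t, (a, P); split=> //; apply/In_iota0.
- do 2 (apply/In_cat; right); apply/In_cat; left.
  by apply/In_allpairs; exists t, c; split=> //; apply/In_iota0.
- do 3 (apply/In_cat; right); apply/In_cat; left.
  by apply/In_allpairs; exists t, c; split=> //; apply/In_iota0.
- do 4 (apply/In_cat; right); apply/In_cat; left.
  by apply/In_allpairs; exists t, a; split; [apply/In_iota0 | apply: In_enum |].
- do 5 (apply/In_cat; right); apply/In_cat; left.
  apply/In_allpairs; exists t, (a, b); split=> //; first exact/In_iota0.
  by apply/In_mem; rewrite mem_filter Hab; apply/allpairsP; exists (a, b); rewrite !mem_enum.
- do 6 (apply/In_cat; right); apply/In_cat; left.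
  by apply/In_allpairs; exists t, l; split=> //; [apply/In_iota0 | apply: In_lits].
- do 7 (apply/In_cat; right).
  by apply/In_allpairs; exists t, f; split; [apply/In_iota0 | apply: In_enum |].
Qed.

End ProgramRules.

Arguments PiInitially {F A D Gamma n}.
Arguments PiExecutable {F A D Gamma n}.
Arguments PiDynamic {F A D Gamma n}.
Arguments PiStatic {F A D Gamma n}.
Arguments PiOcc {F A D Gamma n}.
Arguments PiNocc {F A D Gamma n}.
Arguments PiInertia {F A D Gamma n}.
Arguments PiConsistency {F A D Gamma n}.

Section Soundness.
Variables (F A : finType) (D : domain F A) (Gamma : seq (lit F)) (n : nat).
Variable X : atom F A -> bool.
Hypothesis HX : answer_set (pi_rules D Gamma n) X.

Lemma in_s_of l t : (l \in s_of X t) = X (Holds A l t).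
Proof. by rewrite inE. Qed.

Lemma pi_fires r h : pi_rule D Gamma n r -> Defs.head r = Some h ->
  (forall c, List.In c (neg r) -> ~~ X c) ->
  (forall b, List.In b (pos r) -> X b) -> X h.
Proof. by move/pi_rulesP; exact: answer_set_fires. Qed.

Lemma pi_constraint r : pi_rule D Gamma n r -> Defs.head r = None ->
  (forall c, List.In c (neg r) -> ~~ X c) ->
  ~ (forall b, List.In b (pos r) -> X b).
Proof. by move/pi_rulesP; exact: answer_set_constraint. Qed.

Lemma s_of_consistent t : t <= n -> consistent (s_of X t).
Proof.
move=> Ht f; rewrite !in_s_of => -[Xt Xf].
by apply: (pi_constraint (PiConsistency t f Ht)) => // b [<-|[<-|[]]].
Qed.

Lemma s_of_closed t : t <= n -> closed_DC D (s_of X t).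
Proof.
move=> Ht c Hc Hsub; rewrite in_s_of.
apply: (pi_fires (PiStatic t c Ht Hc)) => //= b /In_map[p /In_mem Hp ->].
by rewrite -in_s_of; apply: Hsub.
Qed.

Lemma s_of_inertia t l : t < n ->
  l \in s_of X t -> compl l \notin s_of X t.+1 -> l \in s_of X t.+1.
Proof.
rewrite !in_s_of => Ht Hl Hc.
by apply: (pi_fires (PiInertia t l Ht)) => //= b [<-|[]].
Qed.

Lemma s0_subset_s_of : s0 Gamma \subset s_of X 0.
Proof.
apply/subsetP => l; rewrite inE in_s_of => Hl.
by apply: (pi_fires (PiInitially l Hl)).
Qed.

Lemma complete_s_of t : complete (s0 Gamma) -> t <= n -> complete (s_of X t).
Proof.
move=> H0; elim: t => [_ | t IH Ht] f.
  by case: (H0 f) => /(subsetP s0_subset_s_of); auto.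
have [b Hb] : exists b, (f, b) \in s_of X t.
  by case: (IH (ltnW Ht) f); eexists; eassumption.
case Hc: (compl (f, b) \in s_of X t.+1); first by case: b {Hb} Hc; auto.
by have := s_of_inertia Ht Hb (negbT Hc); case: b {Hb Hc}; auto.
Qed.

Lemma s_of_state t : interpretation (s0 Gamma) -> t <= n -> is_state D (s_of X t).
Proof.
move=> /interpretationP[_ H0] Ht; split; last exact: s_of_closed.
by apply/interpretationP; split; [exact: s_of_consistent | exact: complete_s_of].
Qed.

Lemma occ_possible a t : X (Occ F a t) -> X (Possible F a t).
Proof.
case/(answer_set_supported HX) => r [/pi_rulesP Hr Hh _ Hpos].
by case: Hr Hh Hpos => //= t' a' _ [-> ->] Hpos; apply: Hpos; left.
Qed.

Lemma possible_executable a t : X (Possible F a t) -> executable D a (s_of X t).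
Proof.
case/(answer_set_supported HX) => r [/pi_rulesP Hr Hh _ Hpos].
case: Hr Hh Hpos => //= t' a' P _ HP [<- <-] Hpos; exists P; split=> // p Hp.
by rewrite in_s_of; apply: Hpos; apply/In_map; exists p => //; apply/In_mem.
Qed.

Lemma occ_unique a b t : t <= n -> X (Occ F a t) -> X (Occ F b t) -> a = b.
Proof.
move=> Ht Ha Hb; case: (eqVneq a b) => // Hab.
have Hnocc : X (Nocc F a t) by apply: (pi_fires (PiNocc t a b Ht Hab)) => //= c [<-|[]].
case/(answer_set_supported HX): Ha => r [/pi_rulesP Hr Hh Hneg _].
case: Hr Hh Hneg => //= t' a' _ [-> ->] Hneg.
by have := Hneg _ (or_introl erefl); rewrite Hnocc.
Qed.

Lemma Eff_subset a t : t < n -> X (Occ F a t) ->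
  Eff D a (s_of X t) \subset s_of X t.+1.
Proof.
move=> Ht Hocc; apply/subsetP => l; rewrite inE.
case/hasP=> c /In_mem Hc /andP[/andP[/eqP Ea /eqP <-] /allP Hall].
rewrite in_s_of; apply: (pi_fires (PiDynamic t c Ht Hc)) => //= b.
case=> [<-|[<-|/In_map[p /In_mem Hp ->]]]; rewrite ?Ea //; first exact: occ_possible.
by rewrite -in_s_of; apply: Hall.
Qed.

(* A literal becomes true at [t+1] only through a dynamic law of an action
   occurring at [t], through inertia, or through a static law. *)
Lemma s_of_succ_least t (w : {set lit F}) : closed_DC D w ->
  (forall c, List.In c (dynamic_laws D) -> X (Occ F c.1.1 t) ->
     {subset c.2 <= s_of X t} -> c.1.2 \in w) ->
  s_of X t :&: s_of X t.+1 \subset w ->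
  s_of X t.+1 \subset w.
Proof.
move=> Hw Hdyn /subsetP Hinert.
have HQ y : X y -> forall l, y = Holds A l t.+1 -> l \in w.
  move: y; apply: (answer_set_ind HX) => r h /pi_rulesP Hr Hh Hneg Hpos l Eh; subst h.
  case: Hr Hh Hneg Hpos => //=.
  - move=> t' c _ Hc [<- Et] _ Hpos; subst t'; apply: Hdyn Hc _ _.
      by have [] := Hpos _ (or_introl erefl).
    by move=> p Hp; rewrite in_s_of; apply: (Hpos _ (or_intror (or_intror _))).1;
       apply/In_map; exists p => //; apply/In_mem.
  - move=> t' c _ Hc [<- ->] _ Hpos; apply: Hw Hc _ => p Hp.
    by apply: (Hpos _ _).2 erefl; apply/In_map; exists p => //; apply/In_mem.
  - move=> t' l' Ht' [<- Et] Hneg Hpos; subst t'; apply: Hinert.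
    rewrite inE !in_s_of (Hpos _ (or_introl erefl)).1.
    by apply: (pi_fires (PiInertia t l' Ht')) => // b /Hpos[].
by apply/subsetP => l; rewrite in_s_of => /HQ; apply.
Qed.

Lemma s_of_succ_Phi a t : interpretation (s0 Gamma) -> t < n -> X (Occ F a t) ->
  in_Phi D a (s_of X t) (s_of X t.+1).
Proof.
move=> H0 Ht Hocc; split; first exact/possible_executable/occ_possible.
split; first exact: s_of_state.
split; first exact: s_of_consistent.
split; first by rewrite subUset Eff_subset // subsetIr.
split; first exact: s_of_closed.
move=> w _; rewrite subUset => /andP[/subsetP HE HI] Hw.
apply: s_of_succ_least => // c Hc Hoc Hsub; apply: HE; rewrite inE.
apply/hasP; exists c; first exact/In_mem.
by rewrite (occ_unique (ltnW Ht) Hoc Hocc) !eqxx; apply/allP.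
Qed.

Lemma s_of_succ_frame t : t < n -> (forall a, ~~ X (Occ F a t)) ->
  s_of X t.+1 = s_of X t.
Proof.
move=> Ht Hno.
have Hsub : s_of X t.+1 \subset s_of X t.
  apply: s_of_succ_least (s_of_closed (ltnW Ht)) _ (subsetIl _ _) => c _ Hoc.
  by move: (Hno c.1.1); rewrite Hoc.
apply/eqP; rewrite eqEsubset Hsub; apply/subsetP => l Hl.
apply: s_of_inertia => //; apply/negP => /(subsetP Hsub) Hc.
by have := consistent_compl (s_of_consistent (ltnW Ht)) Hl; rewrite Hc.
Qed.

End Soundness.

Theorem mainTheorem5 (F A : finType) (D : domain F A) (Gamma : seq (lit F))
    (n : nat) (X : atom F A -> bool) :
  consistent_theory D Gamma ->
  answer_set (pi_rules D Gamma n) X ->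
  (forall t, t <= n -> is_state D (s_of X t)) /\
  (forall t (a : A), t < n -> X (Occ F a t) ->
     executable D a (s_of X t) /\ in_Phi D a (s_of X t) (s_of X t.+1)) /\
  (forall t, t < n -> (forall a : A, ~~ X (Occ F a t)) ->
     s_of X t.+1 = s_of X t).
Proof.
move=> [_ [H0 _]] HX; split; [|split].
- by move=> t; apply: (s_of_state HX H0).
- move=> t a Ht Hocc; have HPhi := s_of_succ_Phi HX H0 Ht Hocc.
  by split=> //; case: HPhi.
- by move=> t; apply: (s_of_succ_frame HX).
Qed.
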